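(* Let $U\subseteq\mathbb{R}^n$ be an $n$-dimensional compact convex set, and let $x_0,\ldots,x_n\in\partial U$ be affinely independent (so they are the vertices of an $n$-simplex). Then for each $u\in U$ there exists $m\in\{0,\ldots,n\}$ such that the straight line $\ell_{u,x_m}$ through $u$ and $x_m$ intersects the affine hull $\mathrm{aff}(\{x_0,\ldots,x_n\}\setminus\{x_m\})$ at a point of $U$. *)

From HB Require Import structures.
From mathcomp Require Import all_boot all_order all_algebra.
From mathcomp Require Import all_classical all_reals all_analysis.
Set Implicit Arguments. Unset Strict Implicit. Unset Printing Implicit Defensive.
Import Order.TTheory GRing.Theory Num.Theory.
Import numFieldNormedType.Exports.
Local Open Scope classical_set_scope.
Local Open Scope ring_scope.

Definition convex_vset (R : realType) (n : nat) (U : set 'rV[R]_n) : Prop :=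
  forall x y (t : R), U x -> U y -> 0 <= t -> t <= 1 -> U (t *: x + (1 - t) *: y).

Definition aff_hull (R : realType) (n : nat) (A : set 'rV[R]_n) : set 'rV[R]_n :=
  [set x | exists (k : nat) (p : 'I_k -> 'rV[R]_n) (w : 'I_k -> R),
      (forall i, A (p i)) /\ \sum_(i < k) w i = 1 /\ x = \sum_(i < k) w i *: p i].

Definition full_dim (R : realType) (n : nat) (U : set 'rV[R]_n) : Prop :=
  aff_hull U = setT.

Definition boundary (R : realType) (n : nat) (U : set 'rV[R]_n) : set 'rV[R]_n :=
  closure U `\` interior U.

Definition aff_indep (R : realType) (n k : nat) (x : 'I_k -> 'rV[R]_n) : Prop :=
  forall w : 'I_k -> R, \sum_(i < k) w i = 0 -> \sum_(i < k) w i *: x i = 0 ->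
    forall i, w i = 0.

Definition line_through (R : realType) (n : nat) (u v : 'rV[R]_n) : set 'rV[R]_n :=
  [set u + t *: (v - u) | t in [set: R]].

From HB Require Import structures.
From mathcomp Require Import all_boot all_order all_algebra.
From mathcomp Require Import all_classical all_reals all_analysis.
From mathcomp Require Import ring lra.
Set Implicit Arguments. Unset Strict Implicit. Unset Printing Implicit Defensive.
Import Order.TTheory GRing.Theory Num.Theory.
Import numFieldNormedType.Exports.
Local Open Scope classical_set_scope.
Local Open Scope ring_scope.

(* Write u in barycentric coordinates [l] with respect to the simplex.  The
   line through u and x_m meets the opposite facet at
   p = (u - l_m x_m) / (1 - l_m), whose barycentric coordinates are
   l_j / (1 - l_m) for j <> m.  If some l_m <= 0, then p lies on the segment
   [u, x_m] and hence in U by convexity.  Otherwise all l_j are positive, so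
   p is a convex combination of vertices, which lie in U since U is closed.
   For n = 0 there are no boundary points at all. *)

Section Barycentric.
Variables (R : realType) (n : nat) (x : 'I_n.+1 -> 'rV[R]_n).

(* Row i is (1, x_i): a row vector w maps to (sum w, sum w_i x_i). *)
Definition barycentric_mx : 'M[R]_(n.+1, 1 + n) :=
  row_mx (const_mx 1) (\matrix_i x i).

Lemma mul_barycentric_mx (w : 'rV[R]_n.+1) :
  w *m barycentric_mx = row_mx (\sum_i w 0 i)%:M (\sum_i w 0 i *: x i).
Proof.
rewrite mul_mx_row; congr row_mx.
  apply/matrixP => i j; rewrite !ord1 !mxE /= mulr1n.
  by apply: eq_bigr => k _; rewrite mxE mulr1.
by rewrite mulmx_sum_row; apply: eq_bigr => k _; rewrite rowK.
Qed.

Lemma barycentric_mx_unit : aff_indep x -> (barycentric_mx : 'M[R]_n.+1) \in unitmx.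
Proof.
move=> hx; rewrite -row_free_unit -kermx_eq0; apply/eqP/row_matrixP => i.
have := congr1 (row i) (mulmx_ker barycentric_mx).
rewrite row_mul row0 mul_barycentric_mx => /eqP; rewrite row_mx_eq0.
case/andP => /eqP/matrixP/(_ 0 0); rewrite !mxE /= mulr1n => sum0 /eqP comb0.
by apply/rowP => k; rewrite [RHS]mxE; apply: hx sum0 comb0 k.
Qed.

Lemma aff_indep_barycentric : aff_indep x -> forall u : 'rV[R]_n,
  exists l : 'I_n.+1 -> R, \sum_i l i = 1 /\ u = \sum_i l i *: x i.
Proof.
move=> hx u; pose w := row_mx (1%:M : 'M[R]_1) u *m invmx barycentric_mx.
have : w *m barycentric_mx = row_mx 1%:M u by rewrite mulmxKV // barycentric_mx_unit.
rewrite mul_barycentric_mx => /eq_row_mx [/matrixP/(_ 0 0) sum1 u_eq].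
by exists (w 0); rewrite u_eq; split=> //; move: sum1; rewrite !mxE /= !mulr1n.
Qed.

End Barycentric.

Lemma convex_vset_sum (R : realType) (n : nat) (U : set 'rV[R]_n) :
  convex_vset U -> forall k (p : 'I_k -> 'rV[R]_n) (w : 'I_k -> R),
  (forall i, U (p i)) -> (forall i, 0 <= w i) -> \sum_i w i = 1 ->
  U (\sum_i w i *: p i).
Proof.
move=> hU; elim=> [|k IH] p w hp hw; first by rewrite big_ord0 => /eqP; rewrite eq_sym oner_eq0.
rewrite !big_ord_recl; set s := \sum_(i < k) _ => hs.
have s_ge0 : 0 <= s by apply: sumr_ge0.
have [s0|s_neq0] := eqVneq s 0.
  rewrite big1 ?addr0 => [|i _]; first by move: hs; rewrite s0 addr0 => ->; rewrite scale1r.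
  by rewrite (psumr_eq0P (fun j _ => hw (lift ord0 j)) s0) ?scale0r.
have s_gt0 : 0 < s by rewrite lt_def s_neq0.
have Uq : U (\sum_i (w (lift ord0 i) / s) *: p (lift ord0 i)).
  apply: IH => [i|i|]; first exact: hp; first exact: divr_ge0.
  by rewrite -mulr_suml mulfV.
have w0_le1 : w ord0 <= 1 by rewrite -hs lerDl.
have := hU _ _ _ (hp ord0) Uq (hw ord0) w0_le1.
rewrite (_ : 1 - w ord0 = s); last by rewrite -hs addrC addKr.
rewrite scaler_sumr.
congr (U (_ + _)); apply: eq_bigr => i _.
by rewrite scalerA mulrCA mulfV // mulr1.
Qed.

Lemma barycentric_lt1 (R : realDomainType) (k : nat) (l : 'I_k.+2 -> R) :
  (forall i, 0 < l i) -> \sum_i l i = 1 -> forall m, l m < 1.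
Proof.
move=> lpos l_sum1 m; move: l_sum1; rewrite (bigD1 m) //= (bigD1 (m + 1)%R) /=; last first.
  by rewrite -subr_eq0 addrAC subrr add0r oner_eq0.
have : 0 <= \sum_(i | (i != m) && (i != m + 1)%R) l i by apply: sumr_ge0 => i _; exact: ltW.
have := lpos (m + 1)%R; lra.
Qed.

Section FacetPoint.
Variables (R : realType) (n : nat).

(* The point where the line through u and v meets the affine hull of the
   facet opposite v, when v has barycentric weight a in u. *)
Definition facet_point (a : R) (u v : 'rV[R]_n) := (1 - a)^-1 *: (u - a *: v).

Lemma facet_point_segment a u v : a != 1 ->
  facet_point a u v = (- a / (1 - a)) *: v + (1 - - a / (1 - a)) *: u.
Proof.
move=> a_neq1; have a1 : 1 - a != 0 by rewrite subr_eq0 eq_sym.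
have -> : 1 - - a / (1 - a) = (1 - a)^-1 by field.
by rewrite /facet_point scalerBr addrC scalerA mulNr mulrC -scaleNr.
Qed.

Lemma line_through_facet_point a u v : a != 1 ->
  line_through u v (facet_point a u v).
Proof.
move=> a_neq1; exists (- a / (1 - a)) => //.
by rewrite facet_point_segment // scalerBr scalerBl scale1r addrCA addrC.
Qed.

Lemma convex_facet_point (U : set 'rV[R]_n) a u v :
  convex_vset U -> U u -> U v -> a <= 0 -> U (facet_point a u v).
Proof.
move=> hU Uu Uv a_le0; have a_neq1 : a != 1 by apply: contraTneq a_le0 => ->; rewrite ler10.
rewrite facet_point_segment //; apply: hU => //.
  by rewrite divr_ge0 ?oppr_ge0 // subr_ge0 (le_trans a_le0).
by rewrite ler_pdivrMr ?mul1r ?subr_gt0 ?(le_lt_trans a_le0) //; lra.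
Qed.

Lemma facet_point_barycentric (x : 'I_n.+1 -> 'rV[R]_n) (l : 'I_n.+1 -> R) m :
  \sum_i l i = 1 -> l m != 1 ->
  \sum_j (1 - l m)^-1 * l (lift m j) = 1 /\
  facet_point (l m) (\sum_i l i *: x i) (x m)
    = \sum_j ((1 - l m)^-1 * l (lift m j)) *: x (lift m j).
Proof.
move=> l_sum1 lm_neq1; have lm1 : 1 - l m != 0 by rewrite subr_eq0 eq_sym.
have rest : \sum_j l (lift m j) = 1 - l m by rewrite -l_sum1 (bigD1_ord m) // addrC addKr.
split; first by rewrite -mulr_sumr rest mulVf.
rewrite /facet_point (bigD1_ord m) //= addrAC subrr add0r scaler_sumr.
by apply: eq_bigr => j _; rewrite scalerA.
Qed.

Lemma aff_hull_facet_point (x : 'I_n.+1 -> 'rV[R]_n) (l : 'I_n.+1 -> R) m :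
  \sum_i l i = 1 -> l m != 1 ->
  aff_hull [set x j | j in [set j | j != m]]
    (facet_point (l m) (\sum_i l i *: x i) (x m)).
Proof.
move=> l_sum1 lm_neq1; have [w_sum1 ->] := facet_point_barycentric x l_sum1 lm_neq1.
exists n, (fun j => x (lift m j)), (fun j => (1 - l m)^-1 * l (lift m j)).
by split=> // j; exists (lift m j) => //=; rewrite eq_sym neq_lift.
Qed.

End FacetPoint.

Lemma compact_boundary_sub (R : realType) (n : nat) (U : set 'rV[R]_n) y :
  compact U -> boundary U y -> U y.
Proof. by move=> cU [/(compact_closed (@norm_hausdorff _ _) cU)]. Qed.

Lemma boundary_rV0 (R : realType) (U : set 'rV[R]_0) u y : U u -> ~ boundary U y.
Proof.
move=> Uu [_]; apply; suff -> : U = setT by rewrite interiorT.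
by apply/seteqP; split=> // z _; rewrite (thinmx0 z) -(thinmx0 u).
Qed.

Theorem lemma6p2 (R : realType) (n : nat) (U : set 'rV[R]_n)
  (x : 'I_n.+1 -> 'rV[R]_n) :
  compact U -> convex_vset U -> full_dim U ->
  (forall i, boundary U (x i)) -> aff_indep x ->
  forall u, U u ->
  exists m : 'I_n.+1, exists p,
    U p /\ line_through u (x m) p /\
    aff_hull [set x j | j in [set j : 'I_n.+1 | j != m]] p.
Proof.
move=> cU hU _ hb hind u Uu.
case: n => [|n] in U x cU hU hb hind u Uu *; first by case: (boundary_rV0 Uu (hb ord0)).
have xU i : U (x i) by apply: compact_boundary_sub (hb i).
have [l [l_sum1 u_eq]] := aff_indep_barycentric hind u; subst u.
suff [m [lm_neq1 Up]] : exists m, l m != 1 /\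
    U (facet_point (l m) (\sum_i l i *: x i) (x m)).
  exists m, (facet_point (l m) (\sum_i l i *: x i) (x m)).
  by split; [|split; [apply: line_through_facet_point|apply: aff_hull_facet_point]].
have [[m lm_le0]|/forallNP l_gt0] := pselect (exists m, l m <= 0).
  exists m; split; first by apply: contraTneq lm_le0 => ->; rewrite ler10.
  exact: convex_facet_point (xU m) lm_le0.
have {}l_gt0 i : 0 < l i by rewrite ltNge; apply/negP/l_gt0.
have lm_neq1 : l ord0 != 1 by rewrite lt_eqF // barycentric_lt1.
exists ord0; split => //; have [w_sum1 ->] := facet_point_barycentric x l_sum1 lm_neq1.
apply: convex_vset_sum => // j.
by rewrite mulr_ge0 ?invr_ge0 ?subr_ge0 ?ltW ?barycentric_lt1.
Qed.
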